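(* Let $G$ be a Chevalley–Demazure group scheme with root system $\Phi\in\{E_6,E_7,E_8,F_4\}$ and $R$ a commutative integral domain with $R^*\neq\{1\}$. Let $\alpha,\beta\in\Phi$ be linearly independent. Then there is a torus witness for $(\alpha,\beta)$, except possibly when $R^*=\{\pm1\}$, $\Phi=F_4$, and $\alpha,\beta$ are orthogonal and both long.
   Context: $T$ is the distinguished maximal torus of $G$. A torus witness for $(\alpha,\beta)$ is an element $s\in T(R)$ that centralizes the root subgroup $U_\alpha$ and satisfies $\mathrm{C}_{U_\beta}(s)=1$. *)

(* Combinatorial model of the distinguished maximal torus T
   of a Chevalley-Demazure group scheme acting on its root subgroups. *)
From HB Require Import structures.
From mathcomp Require Import all_boot all_order all_algebra.
Set Implicit Arguments. Unset Strict Implicit. Unset Printing Implicit Defensive.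
Import Order.TTheory GRing.Theory Num.Theory.
Local Open Scope ring_scope.

Inductive exc_type := E6 | E7 | E8 | F4.

Definition rk (P : exc_type) : nat :=
  match P with E6 => 6 | E7 => 7 | E8 => 8 | F4 => 4 end.

(* Gram matrices of the simple roots (Bourbaki labelling, 0-indexed).
   E_n : 1-3-4-5-6-7-8 with 2 attached to 4; all roots of norm 2.
   F4  : a1 - a2 => a3 - a4, a1,a2 long (norm 4), a3,a4 short (norm 2). *)
Definition gramE (i j : nat) : int :=
  if i == j then 2 else
  if [|| (i, j) \in [:: (0,2); (1,3); (2,3); (3,4); (4,5); (5,6); (6,7)]%N
       | (j, i) \in [:: (0,2); (1,3); (2,3); (3,4); (4,5); (5,6); (6,7)]%N]
  then -1 else 0.

Definition gramF (i j : nat) : int :=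
  match i, j return int with
  | 0, 0 => 4%:Z | 1, 1 => 4%:Z | 2, 2 => 2%:Z | 3, 3 => 2%:Z
  | 0, 1 => - 2%:Z | 1, 0 => - 2%:Z
  | 1, 2 => - 2%:Z | 2, 1 => - 2%:Z
  | 2, 3 => - 1%:Z | 3, 2 => - 1%:Z
  | _, _ => 0%:Z
  end%N.

Definition gram (P : exc_type) : 'M[rat]_(rk P) :=
  \matrix_(i, j) (if P is F4 then gramF i j else gramE i j)%:~R.

(* Vectors are written in coordinates with respect to the simple roots. *)
Definition form (P : exc_type) (u v : 'rV[rat]_(rk P)) : rat :=
  (u *m gram P *m v^T) 0 0.

Definition simple_root (P : exc_type) (i : 'I_(rk P)) : 'rV[rat]_(rk P) :=
  delta_mx 0 i.

Definition copair (P : exc_type) (v a : 'rV[rat]_(rk P)) : rat :=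
  2 * form v a / form a a.

Definition simple_refl (P : exc_type) (i : 'I_(rk P)) (v : 'rV[rat]_(rk P)) :=
  v - copair v (simple_root i) *: simple_root i.

(* The root system Phi = W . Delta : orbit of the simple roots under the
   group generated by the simple reflections. *)
Inductive is_root (P : exc_type) : 'rV[rat]_(rk P) -> Prop :=
  | root_simple i : is_root (simple_root i)
  | root_refl i v : is_root v -> is_root (simple_refl i v).

Definition is_long (P : exc_type) (a : 'rV[rat]_(rk P)) : Prop :=
  forall g : 'rV[rat]_(rk P), is_root g -> form g g <= form a a.

Definition roots_orthogonal (P : exc_type) (a b : 'rV[rat]_(rk P)) : Prop :=
  form a b = 0.

Definition lin_indep (n : nat) (a b : 'rV[rat]_n) : Prop :=
  forall x y : rat, x *: a + y *: b = 0 -> x = 0 /\ y = 0.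

Definition in_weight_lattice (P : exc_type) (l : 'rV[rat]_(rk P)) : Prop :=
  forall a, is_root a -> copair l a \is a Num.int.

(* The character lattice Lambda of the torus of G: a subgroup with
   Q(Phi) <= Lambda <= P(Phi).  (Phi, Lambda) determines G up to iso. *)
Definition admissible_lattice (P : exc_type) (L : 'rV[rat]_(rk P) -> Prop) : Prop :=
  [/\ L 0, (forall x y, L x -> L y -> L (x - y)),
      (forall a, is_root a -> L a) & (forall x, L x -> in_weight_lattice x)].

(* T(R) = Hom(Lambda, units of R) : elements of the split maximal torus. *)
Definition torus_elt (P : exc_type) (L : 'rV[rat]_(rk P) -> Prop)
    (R : comUnitRingType) (s : 'rV[rat]_(rk P) -> R) : Prop :=
  (forall x, L x -> s x \is a GRing.unit) /\
  (forall x y, L x -> L y -> s (x + y) = s x * s y).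

(* Conjugation action of s on U_a = { x_a(t) | t in R } :
   s x_a(t) s^-1 = x_a(a(s) t), where a(s) = s a.  We record the parameter. *)
Definition torus_act (P : exc_type) (R : comUnitRingType)
    (s : 'rV[rat]_(rk P) -> R) (a : 'rV[rat]_(rk P)) (t : R) : R := s a * t.

(* s centralizes U_a  (x_a is injective) *)
Definition centralizes_root_subgroup (P : exc_type) (R : comUnitRingType)
    (s : 'rV[rat]_(rk P) -> R) (a : 'rV[rat]_(rk P)) : Prop :=
  forall t, torus_act s a t = t.

(* C_{U_b}(s) = 1 : the only x_b(t) fixed by s is x_b(0) = 1 *)
Definition trivial_centralizer_in (P : exc_type) (R : comUnitRingType)
    (s : 'rV[rat]_(rk P) -> R) (b : 'rV[rat]_(rk P)) : Prop :=
  forall t, torus_act s b t = t -> t = 0.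

Definition torus_witness (P : exc_type) (L : 'rV[rat]_(rk P) -> Prop)
    (R : comUnitRingType) (s : 'rV[rat]_(rk P) -> R) (a b : 'rV[rat]_(rk P)) : Prop :=
  [/\ torus_elt L s, centralizes_root_subgroup s a & trivial_centralizer_in s b].

From Pilot Require Import Defs.
From HB Require Import structures.
From mathcomp Require Import all_boot all_order all_algebra ring.
From Stdlib Require Import Classical.
Import Order.TTheory GRing.Theory Num.Theory.
Local Open Scope ring_scope.
Set Implicit Arguments. Unset Strict Implicit. Unset Printing Implicit Defensive.

(* For a unit u of R and a root g, the character x |-> u ^ <x, g^vee> of the
   character lattice L is an element s of T(R); it acts on U_a by
   u ^ <a, g^vee>.  Hence (a, b) has a torus witness as soon as
   - some root g is orthogonal to a with <b, g^vee> = 1 or -1 (take any unit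
     u <> 1), or
   - a and b are orthogonal (take g = b, so <b, b^vee> = 2) and some unit u
     has u ^+ 2 <> 1, i.e. R^* <> {1, -1}.
   Simple reflections are isometries preserving L, so witnesses and all the
   hypotheses transport along them; since every root is obtained from a simple
   root by simple reflections, we may assume that a is a simple root.  The
   remaining finite problem is settled by a computation in integer
   coordinates: the roots are enumerated by closing the simple roots under
   simple reflections (every listed vector is a root by construction, and the
   list is checked to be closed, hence complete), and for each simple root a
   and each root b <> +-a either a coroot as above is found, or a and b are
   orthogonal long roots of F4, which is the exceptional case. *)

(* The algebra tactics library also defines a [form]; here it always means
   the bilinear form of the root system. *)
Local Notation form := Defs.form.

Definition gram_entry (P : exc_type) (i j : nat) : int :=
  if P is F4 then gramF i j else gramE i j.

Lemma gram_entry_sym P i j : gram_entry P i j = gram_entry P j i.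
Proof.
case: P; rewrite /gram_entry; last by case: i j => [|[|[|[|i]]]] [|[|[|[|j]]]].
all: by rewrite /gramE eq_sym orbC.
Qed.

Lemma gram_entry_diag_neq0 P (i : 'I_(rk P)) : gram_entry P i i != 0.
Proof.
case: P i => [i|i|i|[[|[|[|[|i]]]] //]]; by rewrite /gram_entry /gramE eqxx.
Qed.

Section BilinearForm.
Variable P : exc_type.
Implicit Types (x y z : 'rV[rat]_(rk P)) (k : rat).

Lemma gram_sym : (gram P)^T = gram P.
Proof. by apply/matrixP => i j; rewrite !mxE -/(gram_entry P j i) gram_entry_sym. Qed.

Lemma formDl x y z : form (x + y) z = form x z + form y z.
Proof. by rewrite /form !mulmxDl mxE. Qed.

Lemma formZl k x z : form (k *: x) z = k * form x z.
Proof. by rewrite /form -!scalemxAl mxE. Qed.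

Lemma form_sym x y : form x y = form y x.
Proof.
rewrite /form -[in RHS](trmxK (y *m gram P *m x^T)) [in RHS]mxE.
by rewrite !trmx_mul trmxK gram_sym mulmxA.
Qed.

Lemma formBl x y z : form (x - y) z = form x z - form y z.
Proof. by rewrite formDl -scaleN1r formZl mulN1r. Qed.

Lemma formZr k x z : form z (k *: x) = k * form z x.
Proof. by rewrite !(form_sym z) formZl. Qed.

Lemma formBr x y z : form z (x - y) = form z x - form z y.
Proof. by rewrite !(form_sym z) formBl. Qed.

Lemma copairDl x y z : copair (x + y) z = copair x z + copair y z.
Proof. by rewrite /copair formDl mulrDr mulrDl. Qed.

Lemma copairZl k x z : copair (k *: x) z = k * copair x z.
Proof. by rewrite /copair formZl mulrCA !mulrA. Qed.

Lemma form_simple_root (i : 'I_(rk P)) :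
  form (simple_root i) (simple_root i) = (gram_entry P i i)%:~R.
Proof. by rewrite /form /simple_root -rowE trmx_delta -colE !mxE. Qed.

Lemma simple_root_nondeg (i : 'I_(rk P)) : form (simple_root i) (simple_root i) != 0.
Proof. by rewrite form_simple_root intr_eq0 gram_entry_diag_neq0. Qed.

End BilinearForm.

Definition reflection P (v x : 'rV[rat]_(rk P)) : 'rV[rat]_(rk P) :=
  x - copair x v *: v.

Lemma simple_reflE P (i : 'I_(rk P)) : simple_refl i = reflection (simple_root i).
Proof. by []. Qed.

Section Reflection.
Variables (P : exc_type) (v : 'rV[rat]_(rk P)).
Hypothesis v_nondeg : form v v != 0.
Local Notation sv := (reflection v).
Implicit Types (x y : 'rV[rat]_(rk P)) (k : rat).

Lemma reflection_isometry x y : form (sv x) (sv y) = form x y.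
Proof.
rewrite /reflection !formBl !formBr !formZl !formZr (form_sym v y) /copair.
by field.
Qed.

Lemma reflectionK : involutive sv.
Proof.
move=> x; have sv_copair : copair (sv x) v = - copair x v.
  by rewrite /reflection /copair formBl formZl; field.
by rewrite {1}/reflection sv_copair scaleNr opprK subrK.
Qed.

Lemma reflection_linear k1 k2 x y : sv (k1 *: x + k2 *: y) = k1 *: sv x + k2 *: sv y.
Proof.
by rewrite /reflection copairDl !copairZl scalerDl !scalerBr !scalerA opprD addrACA.
Qed.

Lemma reflectionD x y : sv (x + y) = sv x + sv y.
Proof. by have := reflection_linear 1 1 x y; rewrite !scale1r. Qed.

(* Being an invertible linear map, a reflection preserves linear independence. *)
Lemma lin_indep_reflection x y : lin_indep x y -> lin_indep (sv x) (sv y).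
Proof.
have sv0 : sv 0 = 0 by have := reflection_linear 0 0 0 0; rewrite !scale0r addr0.
move=> indep k1 k2 /(congr1 sv); rewrite reflection_linear !reflectionK sv0.
exact: indep.
Qed.

End Reflection.

Section Lattice.
Variables (P : exc_type) (L : 'rV[rat]_(rk P) -> Prop).
Hypothesis hL : admissible_lattice L.

Lemma lattice_opp x : L x -> L (- x).
Proof. by case: hL => L0 LB _ _ Lx; rewrite -sub0r; exact: LB L0 Lx. Qed.

Lemma lattice_add x y : L x -> L y -> L (x + y).
Proof.
by case: hL => _ LB _ _ Lx Ly; rewrite -[y]opprK; apply/LB/lattice_opp.
Qed.

Lemma lattice_zscale (z : int) x : L x -> L (z%:~R *: x).
Proof.
move=> Lx; have Lnat (n : nat) : L (n%:R *: x).
  elim: n => [|n IH]; first by rewrite scale0r; case: hL.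
  by rewrite mulrSr scalerDl scale1r; apply: lattice_add.
by case: z => n; rewrite ?NegzE ?intrN ?scaleNr; [apply: Lnat | apply/lattice_opp/Lnat].
Qed.

(* [L] lies in the weight lattice, so reflecting along a root adds an
   integral multiple of that root: reflections preserve [L]. *)
Lemma lattice_reflection v x : is_root v -> L x -> L (reflection v x).
Proof.
case: hL => _ LB Lroot Lweight rv Lx; apply: LB => //.
by rewrite -(floorK (Lweight _ Lx _ rv)); apply/lattice_zscale/Lroot.
Qed.

End Lattice.

Definition has_torus_witness P (L : 'rV[rat]_(rk P) -> Prop) (R : idomainType)
    (a b : 'rV[rat]_(rk P)) : Prop :=
  exists s : 'rV[rat]_(rk P) -> R, torus_witness L s a b.

Definition exceptional_pair P (R : idomainType) (a b : 'rV[rat]_(rk P)) : Prop :=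
  [/\ (forall u : R, u \is a GRing.unit -> u = 1 \/ u = -1),
      P = F4, roots_orthogonal a b, is_long a & is_long b].

(* Precomposing a torus element with an additive endomorphism [f] of [L]
   gives a torus element, acting on [U_a] as the original one acts on
   [U_(f a)]; so witnesses transport along [f]. *)
Lemma torus_witness_comp P (L : 'rV[rat]_(rk P) -> Prop) (R : comUnitRingType)
    (f : 'rV[rat]_(rk P) -> 'rV[rat]_(rk P)) (s : 'rV[rat]_(rk P) -> R) a b :
    (forall x, L x -> L (f x)) -> (forall x y, f (x + y) = f x + f y) ->
  torus_witness L s (f a) (f b) -> torus_witness L (s \o f) a b.
Proof.
move=> fL fD [[s_unit s_mul] cent triv]; split.
- split=> [x Lx | x y Lx Ly]; first exact: s_unit (fL _ Lx).
  by rewrite /= fD s_mul //; apply: fL.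
- by move=> t; apply: cent.
- by move=> t; apply: triv.
Qed.

Section WeylReduction.
Variables (P : exc_type) (L : 'rV[rat]_(rk P) -> Prop) (R : idomainType).
Hypothesis hL : admissible_lattice L.

(* Orthogonality and length are invariant under the isometry s_i. *)
Lemma exceptional_pair_reflection (i : 'I_(rk P)) a b :
  exceptional_pair R a b -> exceptional_pair R (simple_refl i a) (simple_refl i b).
Proof.
have iso := reflection_isometry (simple_root_nondeg i).
case=> units F4P orth long_a long_b; split=> //.
- by rewrite /roots_orthogonal iso.
- by move=> g rg; rewrite iso; apply: long_a.
- by move=> g rg; rewrite iso; apply: long_b.
Qed.

(* s_i is additive and preserves [L], so a witness for (s_i a, s_i b) gives
   one for (a, b). *)
Lemma has_torus_witness_reflection (i : 'I_(rk P)) a b :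
  has_torus_witness L R (simple_refl i a) (simple_refl i b) -> has_torus_witness L R a b.
Proof.
case=> s ws; exists (s \o simple_refl i); apply: torus_witness_comp ws.
  by move=> x; apply: lattice_reflection => //; constructor.
exact: reflectionD.
Qed.

(* Every root is a simple root moved by simple reflections, and all the
   data of the problem are invariant under them: it suffices to treat the
   case where [a] is simple. *)
Lemma reduce_to_simple_root :
    (forall (j : 'I_(rk P)) b, is_root b -> lin_indep (simple_root j) b ->
       ~ exceptional_pair R (simple_root j) b -> has_torus_witness L R (simple_root j) b) ->
  forall a b, is_root a -> is_root b -> lin_indep a b -> ~ exceptional_pair R a b ->
    has_torus_witness L R a b.
Proof.
move=> simple_case a b ra; elim: ra b => [j | i a' _ IH] b rb indep not_exc.
  exact: simple_case.
have invol : involutive (simple_refl i) := reflectionK (simple_root_nondeg i).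
apply: (has_torus_witness_reflection (i := i)); rewrite invol; apply: IH.
- exact: root_refl.
- by rewrite -[a']invol simple_reflE; exact (lin_indep_reflection (simple_root_nondeg i) indep).
- by move=> /(exceptional_pair_reflection i); rewrite invol.
Qed.

End WeylReduction.

Definition coroot_character P (R : idomainType) (u : R) (g x : 'rV[rat]_(rk P)) : R :=
  u ^ Num.floor (copair x g).

Section CorootWitness.
Variables (P : exc_type) (L : 'rV[rat]_(rk P) -> Prop) (R : idomainType).
Hypothesis hL : admissible_lattice L.

Lemma coroot_character_torus (u : R) g :
  u \is a GRing.unit -> is_root g -> torus_elt L (coroot_character u g).
Proof.
case: hL => _ _ _ Lweight unit_u rg; split=> [x _ | x y Lx Ly]; first exact: unitrXz.
have int_x := Lweight x Lx g rg; have int_y := Lweight y Ly g rg.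
have floorD : Num.floor (copair (x + y) g) = Num.floor (copair x g) + Num.floor (copair y g).
  by apply: (@intr_inj rat); rewrite copairDl intrD !floorK ?rpredD.
by rewrite /coroot_character floorD exprzDr.
Qed.

Lemma coroot_witness (u : R) g a b :
    u \is a GRing.unit -> is_root g -> copair a g = 0 ->
    u ^ Num.floor (copair b g) != 1 ->
  torus_witness L (coroot_character u g) a b.
Proof.
move=> unit_u rg orth_a moves_b; split.
- exact: coroot_character_torus.
- by move=> t; rewrite /torus_act /coroot_character orth_a floor0 expr0z mul1r.
- move=> t; rewrite /torus_act -{2}[t]mul1r => /eqP.
  by rewrite -subr_eq0 -mulrBl mulf_eq0 subr_eq0 (negbTE moves_b) => /eqP.
Qed.

Lemma unit_coroot_witness g a b :
    (exists u : R, u \is a GRing.unit /\ u <> 1) -> is_root g -> copair a g = 0 ->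
    copair b g = 1 \/ copair b g = -1 ->
  has_torus_witness L R a b.
Proof.
move=> [u [unit_u u_neq1]] rg orth_a coeff_b.
exists (coroot_character u g); apply: coroot_witness => //.
have [->|->] := coeff_b; first by rewrite floor1 expr1z; apply/eqP.
by rewrite floorN ?rpred1 // floor1 exprN1 invr_eq1; apply/eqP.
Qed.

(* Taking [g = b] itself, so that <b, b^vee> = 2, a unit [u] with
   [u ^+ 2 <> 1] yields a witness when [a] is orthogonal to [b]. *)
Lemma self_coroot_witness (u : R) a b :
    u \is a GRing.unit -> u ^+ 2 != 1 -> is_root b -> form a b = 0 ->
    form b b != 0 ->
  has_torus_witness L R a b.
Proof.
move=> unit_u u2_neq1 rb orth nondeg_b.
exists (coroot_character u b); apply: coroot_witness => //.
  by rewrite /copair orth mulr0 mul0r.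
by rewrite /copair mulfK // -[2]/(2%:~R : rat) intrKfloor.
Qed.

End CorootWitness.

(* Finite sums of integers that evaluate by computation. *)
Definition sumi (n : nat) (F : nat -> int) : int :=
  foldr (fun i acc => F i + acc) 0 (iota 0 n).

Lemma sumiE n F : sumi n F = \sum_(i < n) F i.
Proof.
rewrite /sumi -(big_mkord xpredT F) /index_iota subn0.
by elim: (iota 0 n) => [|x s IH]; rewrite ?big_nil ?big_cons //= IH.
Qed.

Section IntegerCoordinates.
Variable P : exc_type.
Implicit Types (l m : seq int) (i j : nat).

(* Vectors with integral coordinates in the simple roots, as lists. *)
Definition tabulate (F : nat -> int) : seq int := [seq F j | j <- iota 0 (rk P)].

Lemma nth_tabulate F j : (j < rk P)%N -> nth 0 (tabulate F) j = F j.
Proof. by move=> lt_j; rewrite /tabulate (nth_map 0%N) ?size_iota // nth_iota. Qed.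

Definition vec l : 'rV[rat]_(rk P) := \row_j (nth 0 l j)%:~R.

Definition dot_seq l m : int := sumi (rk P) (fun j => nth 0 l j * nth 0 m j).

Definition pair_simple l j : int := sumi (rk P) (fun k => nth 0 l k * gram_entry P k j).
Definition gram_row l : seq int := tabulate (pair_simple l).
Definition dot l m : int := dot_seq (gram_row l) m.

Lemma form_vec l m : form (vec l) (vec m) = (dot l m)%:~R.
Proof.
rewrite /form /dot /dot_seq sumiE mxE rmorph_sum; apply: eq_bigr => j _.
rewrite !mxE /gram_row nth_tabulate // /pair_simple sumiE rmorphM rmorph_sum /=.
by congr (_ * _); apply: eq_bigr => k _; rewrite !mxE intrM.
Qed.

Definition unit_seq i : seq int := tabulate (fun j => (j == i)%:Z).

Lemma vec_unit_seq (i : 'I_(rk P)) : vec (unit_seq i) = simple_root i.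
Proof. by apply/rowP => j; rewrite /simple_root !mxE nth_tabulate. Qed.

Lemma pair_simple_unit_seq i j : (i < rk P)%N -> pair_simple (unit_seq i) j = gram_entry P i j.
Proof.
move=> lt_i; rewrite /pair_simple sumiE (bigD1 (Ordinal lt_i)) //= big1 ?addr0.
  by rewrite nth_tabulate // eqxx mul1r.
move=> k /negbTE k_neq_i; rewrite nth_tabulate //.
by rewrite (_ : (k == i :> nat) = false) ?mul0r //; apply: contraFF k_neq_i => /eqP/val_inj->.
Qed.

Lemma dot_unit_seq l i : (i < rk P)%N -> dot l (unit_seq i) = pair_simple l i.
Proof.
move=> lt_i; rewrite /dot /dot_seq sumiE (bigD1 (Ordinal lt_i)) //= big1 ?addr0.
  by rewrite /gram_row !nth_tabulate // eqxx mulr1.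
move=> k /negbTE k_neq_i; rewrite [nth 0 (unit_seq i) k]nth_tabulate //.
by rewrite (_ : (k == i :> nat) = false) ?mulr0 //; apply: contraFF k_neq_i => /eqP/val_inj->.
Qed.

Definition opp_seq l : seq int := tabulate (fun j => - nth 0 l j).

Lemma vec_opp_seq l : vec (opp_seq l) = - vec l.
Proof. by apply/rowP => j; rewrite !mxE nth_tabulate // intrN. Qed.

(* The simple reflection s_i on integral vectors, valid when the Cartan
   integer <l, a_i^vee> = 2 (l, a_i) / (a_i, a_i) is an integer. *)
Definition refl_coef i l : int := divz (2 * pair_simple l i) (gram_entry P i i).
Definition refl_exact i l : bool := refl_coef i l * gram_entry P i i == 2 * pair_simple l i.
Definition refl_seq i l : seq int :=
  tabulate (fun j => nth 0 l j - (if j == i then refl_coef i l else 0)).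

Lemma vec_refl_seq (i : 'I_(rk P)) l : refl_exact i l ->
  simple_refl i (vec l) = vec (refl_seq i l).
Proof.
move=> /eqP exact_i.
have cartan : copair (vec l) (simple_root i) = (refl_coef i l)%:~R.
  rewrite /copair -vec_unit_seq !form_vec !dot_unit_seq // pair_simple_unit_seq //.
  rewrite -[2]/(2%:~R : rat) -intrM -exact_i intrM mulfK //.
  by rewrite intr_eq0 gram_entry_diag_neq0.
rewrite /simple_refl cartan -vec_unit_seq; apply/rowP => j.
rewrite !mxE /refl_seq !nth_tabulate //.
by case: (j == i :> nat); rewrite ?mulr1 ?mulr0 ?subr0 ?intrB.
Qed.

End IntegerCoordinates.

Section RootEnumeration.
Variable P : exc_type.
Implicit Types (l : seq int) (S F : seq (seq int)).

Definition reflections_of l : seq (seq int) :=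
  [seq refl_seq P i l | i <- iota 0 (rk P) & refl_exact P i l].

(* Breadth-first closure of [S] under simple reflections; [F] is the last
   layer of new vectors and [k] bounds the number of layers. *)
Fixpoint refl_closure (k : nat) S F : seq (seq int) :=
  if k is k'.+1 then
    let N := [seq x <- undup (flatten (map reflections_of F)) | x \notin S] in
    if N is [::] then S else refl_closure k' (S ++ N) N
  else S.

(* The roots, as the closure of the simple roots; 64 layers are more than
   enough, and completeness is checked separately by [refl_closed]. *)
Definition root_list : seq (seq int) :=
  let simples := [seq unit_seq P i | i <- iota 0 (rk P)] in
  refl_closure 64 simples simples.

Definition represents_roots S : Prop := {in S, forall l, is_root (vec P l)}.

Lemma reflections_of_root l : is_root (vec P l) -> represents_roots (reflections_of l).
Proof.
move=> rl x /mapP [i]; rewrite mem_filter mem_iota add0n => /andP [exact_i lt_i] ->.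
by rewrite -(vec_refl_seq (i := Ordinal lt_i)) //; constructor.
Qed.

Lemma refl_closure_roots k S F :
  represents_roots S -> represents_roots F -> represents_roots (refl_closure k S F).
Proof.
elim: k S F => [|k IH] S F //= rS rF.
set N := [seq x <- _ | _]; have rN : represents_roots N.
  move=> x; rewrite mem_filter mem_undup => /andP [_ /flattenP [_ /mapP [l Fl ->] x_l]].
  exact: reflections_of_root (rF l Fl) x x_l.
case: N rN => // x N rN; apply: IH => // y; rewrite mem_cat => /orP [];
  [exact: rS | exact: rN].
Qed.

Lemma root_list_roots : represents_roots root_list.
Proof.
have simple_roots : represents_roots [seq unit_seq P i | i <- iota 0 (rk P)].
  move=> x /mapP [i]; rewrite mem_iota add0n => lt_i ->.
  by rewrite (vec_unit_seq (Ordinal lt_i)); constructor.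
exact: refl_closure_roots.
Qed.

Definition refl_closed S : bool :=
  all (fun i => unit_seq P i \in S) (iota 0 (rk P)) &&
  all (fun l => all (fun i => refl_exact P i l && (refl_seq P i l \in S)) (iota 0 (rk P))) S.

Lemma refl_closed_complete S : refl_closed S ->
  forall v, is_root v -> exists2 l, l \in S & v = vec P l.
Proof.
case/andP => /allP simples_in /allP closed v; elim=> [i | i w _ [l Sl ->]].
  exists (unit_seq P i); last by rewrite vec_unit_seq.
  by apply: simples_in; rewrite mem_iota add0n ltn_ord.
have /andP [exact_i Sil] : refl_exact P i l && (refl_seq P i l \in S).
  by apply: (allP (closed l Sl)); rewrite mem_iota /=.
by exists (refl_seq P i l); last rewrite vec_refl_seq.
Qed.

End RootEnumeration.

Record root_data := RootData {
  coords : seq int; simple_pairings : seq int; norm2 : int }.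

Section Certificate.
Variable P : exc_type.

Definition root_data_of (l : seq int) : root_data :=
  RootData l (gram_row P l) (dot P l l).

Definition is_F4 : bool := if P is F4 then true else false.

Definition unit_coroot (j : nat) (b : seq int) (c : root_data) : bool :=
  let bc := 2 * dot_seq P (simple_pairings c) b in
  [&& nth 0 (simple_pairings c) j == 0, norm2 c != 0 & (bc == norm2 c) || (bc == - norm2 c)].

Definition long_orthogonal (j : nat) (b : root_data) : bool :=
  [&& is_F4, nth 0 (simple_pairings b) j == 0, gram_entry P j j == 4 & norm2 b == 4].

Definition pair_certified (T : seq root_data) (j : nat) (b : root_data) : bool :=
  [|| coords b == unit_seq P j, coords b == opp_seq P (unit_seq P j),
      long_orthogonal j b | has (unit_coroot j (coords b)) T].

Definition certified (S : seq (seq int)) : bool :=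
  let T := map root_data_of S in
  [&& refl_closed P S, all (fun l => dot P l l <= 4) S &
      all (fun j => all (pair_certified T j) T) (iota 0 (rk P))].

End Certificate.

Lemma root_list_certified P : certified P (root_list P).
Proof. by case: P; vm_compute. Qed.

Lemma not_lin_indep_multiple n (x : 'rV[rat]_n) (k : rat) : ~ lin_indep x (k *: x).
Proof.
move=> /(_ k (-1)); rewrite scaleN1r subrr => /(_ erefl) [_ /eqP].
by rewrite oppr_eq0 oner_eq0.
Qed.

(* In a domain u ^+ 2 = 1 forces u = 1 or -1, so either R^* = {1, -1} or
   some unit has a square different from 1. *)
Lemma units_square_dichotomy (R : idomainType) :
  (forall u : R, u \is a GRing.unit -> u = 1 \/ u = -1) \/
  exists2 u : R, u \is a GRing.unit & u ^+ 2 != 1.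
Proof.
have [|no_u] := classic (exists2 u : R, u \is a GRing.unit & u ^+ 2 != 1); first by right.
left=> u unit_u; have [|u2_neq1] := boolP (u ^+ 2 == 1); last by case: no_u; exists u.
by rewrite sqrf_eq1 => /orP [] /eqP; [left | right].
Qed.

Section SimpleCase.
Variables (P : exc_type) (L : 'rV[rat]_(rk P) -> Prop) (R : idomainType).
Hypotheses (hL : admissible_lattice L) (hR : exists u : R, u \is a GRing.unit /\ u <> 1).
Variable S : seq (seq int).
Hypotheses (S_roots : represents_roots P S) (S_certified : certified P S).

Lemma form_vec_simple_root l (j : 'I_(rk P)) :
  form (vec P l) (simple_root j) = (nth 0 (gram_row P l) j)%:~R.
Proof. by rewrite -vec_unit_seq form_vec dot_unit_seq // nth_tabulate. Qed.

Lemma copair_vec l m : copair (vec P l) (vec P m) = (2 * dot P m l)%:~R / (dot P m m)%:~R.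
Proof. by rewrite /copair form_sym !form_vec intrM. Qed.

(* Every root has squared length at most 4, so one of length 4 is long. *)
Lemma long_of_norm4 (a : 'rV[rat]_(rk P)) : form a a = 4 -> is_long a.
Proof.
case/and3P: S_certified => closed /allP short _ norm_a g /(refl_closed_complete closed) [l Sl ->].
by rewrite norm_a form_vec -[4]/(4%:~R : rat) ler_int short.
Qed.

(* The case where [a] is simple, read off from the certificate: b = +-a_j is
   excluded by independence, the F4 configuration is either the exception or
   handled by [self_coroot_witness], and otherwise a coroot is listed. *)
Lemma certified_simple_case (j : 'I_(rk P)) b :
    is_root b -> lin_indep (simple_root j) b ->
    ~ exceptional_pair R (simple_root j) b ->
  has_torus_witness L R (simple_root j) b.
Proof.
case/and3P: S_certified => closed _ /allP pairs rb indep not_exc.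
have [lb Slb eq_b] := refl_closed_complete closed rb; subst b.
have j_in : (j : nat) \in iota 0 (rk P) by rewrite mem_iota add0n ltn_ord.
have := pairs _ j_in; rewrite all_map => /allP /(_ _ Slb) /=.
case/or4P => [/eqP /= eq_a | /eqP /= eq_opp | long | ].
- by move: indep; rewrite eq_a vec_unit_seq -[X in lin_indep _ X]scale1r
    => /not_lin_indep_multiple.
- by move: indep; rewrite eq_opp vec_opp_seq vec_unit_seq -scaleN1r
    => /not_lin_indep_multiple.
- case/and4P: long => F4P orth_pair norm_a norm_b.
  have orth : form (simple_root j) (vec P lb) = 0.
    by rewrite form_sym form_vec_simple_root (eqP orth_pair).
  have norm4 (n : int) : n == 4 -> (n%:~R : rat) = 4 by move=> /eqP->.
  case: (units_square_dichotomy R) => [units_pm1 | [u unit_u u2_neq1]].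
    case: not_exc; split=> //; first by move: F4P; rewrite /is_F4; case: (P).
      by apply: long_of_norm4; rewrite form_simple_root norm4.
    by apply: long_of_norm4; rewrite form_vec norm4.
  by apply: (self_coroot_witness hL unit_u u2_neq1) => //; rewrite form_vec norm4.
- rewrite has_map => /hasP [lc Slc /and3P [orth_pair nondeg_c coeff]].
  apply: (unit_coroot_witness hL hR (S_roots Slc)).
    by rewrite /copair form_sym form_vec_simple_root (eqP orth_pair) mulr0 mul0r.
  have nondeg : (dot P lc lc)%:~R != 0 :> rat by rewrite intr_eq0.
  rewrite copair_vec; case/orP: coeff => /eqP ->; [left | right].
    exact: divff.
  by rewrite intrN mulNr divff.
Qed.

End SimpleCase.

Theorem proposition6p4 (P : exc_type) (L : 'rV[rat]_(rk P) -> Prop)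
    (hL : admissible_lattice L) (R : idomainType)
    (hR : exists u : R, u \is a GRing.unit /\ u <> 1)
    (a b : 'rV[rat]_(rk P)) (ha : is_root a) (hb : is_root b)
    (hab : lin_indep a b) :
  ~ [/\ (forall u : R, u \is a GRing.unit -> u = 1 \/ u = -1),
        P = F4, roots_orthogonal a b, is_long a & is_long b] ->
  exists s : 'rV[rat]_(rk P) -> R, torus_witness L s a b.
Proof.
apply: (reduce_to_simple_root hL) => // j.
exact: (certified_simple_case hL hR (@root_list_roots P) (root_list_certified P)).
Qed.
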